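(* Let $n$ be even, $1\le\eta\le n/2$, and $p\ge1$ an integer. On the fermionic Fock space on $n$ spin orbitals define $$T=\sum_{j,k=0}^{n-1}A_j^\dagger A_k,\qquad V=\sum_{x,y=0}^{\frac n2-1}N_xN_y,$$ and let $|a\rangle$ be the basis state in which modes $1,\dots,\eta-1$ and mode $n/2$ are occupied and all others empty, and $|b\rangle$ the basis state in which modes $0,1,\dots,\eta-1$ are occupied and all others empty. Set $|\psi_\eta\rangle=\frac{1}{\sqrt2}(|a\rangle+i|b\rangle)$ and $|\phi_\eta\rangle=\frac1{\sqrt2}(|a\rangle+|b\rangle)$. Writing $D_p=[V,\ldots[V,T]]$ with $p$ copies of $V$, we have $$|\langle\psi_\eta|D_p|\psi_\eta\rangle|\ (p\text{ odd}),\qquad|\langle\phi_\eta|D_p|\phi_\eta\rangle|\ (p\text{ even})\quad=2^p\eta^p+O(\eta^{p-1}),$$ with the implied constant depending only on $p$.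
   Context: Fermionic Fock space on $n$ spin orbitals (modes labeled $0,\dots,n-1$): the $2^n$-dimensional Hilbert space with orthonormal basis $|c_0,c_1,\dots,c_{n-1}\rangle$, $c_j\in\{0,1\}$, where $c_j=1$ means mode $j$ is occupied. Creation operators: $A_j^\dagger|\dots,0_j,\dots\rangle=(-1)^{\sum_{k<j}c_k}|\dots,1_j,\dots\rangle$, $A_j^\dagger|\dots,1_j,\dots\rangle=0$; annihilation operators $A_j=(A_j^\dagger)^\dagger$; $N_j=A_j^\dagger A_j$. *)

From HB Require Import structures.
From mathcomp Require Import all_boot all_order all_algebra all_field.
Set Implicit Arguments. Unset Strict Implicit. Unset Printing Implicit Defensive.
Import Order.TTheory GRing.Theory Num.Theory.
Local Open Scope ring_scope.

(* Occupation-number configurations |c_0,...,c_{n-1}> : the basis of Fock space. *)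
Definition cfg (n : nat) := {ffun 'I_n -> bool}.

(* States: coefficient vectors on the basis; operators: matrices (kernels)
   indexed by basis configurations, O c d = <c|O|d>. *)
Definition state (n : nat) := cfg n -> algC.
Definition op (n : nat) := cfg n -> cfg n -> algC.

Definition opmul n (A B : op n) : op n := fun c d => \sum_(e : cfg n) A c e * B e d.
Definition opadj n (A : op n) : op n := fun c d => (A d c)^*.
Definition comm n (A B : op n) : op n := fun c d => opmul A B c d - opmul B A c d.

Definition jw_sign n (c : cfg n) (j : 'I_n) : algC :=
  (-1) ^+ #|[set k : 'I_n | (k < j)%N && c k]|.

Definition cre n (j : 'I_n) : op n := fun c d =>
  if ~~ d j && (c == [ffun k => if k == j then true else d k])
  then jw_sign d j else 0.

Definition ann n (j : 'I_n) : op n := opadj (cre j).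
Definition numop n (j : 'I_n) : op n := opmul (cre j) (ann j).

Definition Top (n : nat) : op n := fun c d =>
  \sum_(j < n) \sum_(k < n) opmul (cre j) (ann k) c d.

Definition Vop (n : nat) : op n := fun c d =>
  \sum_(x < n | (x < n./2)%N) \sum_(y < n | (y < n./2)%N) opmul (numop x) (numop y) c d.

Definition Dop (n p : nat) : op n := iter p (comm (@Vop n)) (@Top n).

Definition expect n (psi : state n) (O : op n) : algC :=
  \sum_(c : cfg n) \sum_(d : cfg n) (psi c)^* * O c d * psi d.

Definition ket n (c0 : cfg n) : state n := fun c => (c == c0)%:R.

Definition cfg_a n (eta : nat) : cfg n :=
  [ffun k : 'I_n => ((1 <= k)%N && (k < eta)%N) || (nat_of_ord k == n./2)].
Definition cfg_b n (eta : nat) : cfg n := [ffun k : 'I_n => (k < eta)%N].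

Definition psi_eta n (eta : nat) : state n := fun c =>
  (sqrtC 2)^-1 * (ket (@cfg_a n eta) c + 'i * ket (@cfg_b n eta) c).
Definition phi_eta n (eta : nat) : state n := fun c =>
  (sqrtC 2)^-1 * (ket (@cfg_a n eta) c + ket (@cfg_b n eta) c).
Arguments Top n : clear implicits.
Arguments Vop n : clear implicits.
Arguments Dop n p : clear implicits.
Arguments cfg_a n eta : clear implicits.
Arguments cfg_b n eta : clear implicits.
Arguments psi_eta n eta : clear implicits.
Arguments phi_eta n eta : clear implicits.

From HB Require Import structures.
From mathcomp Require Import all_boot all_order all_algebra all_field.
From mathcomp Require Import ring zify.
Import Order.TTheory GRing.Theory Num.Theory.
Local Open Scope ring_scope.

(* V is diagonal in the occupation basis, with eigenvalue L(c)^2 where L(c) counts the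
   occupied modes among the first n/2; hence <c|D_p|d> = (L(c)^2 - L(d)^2)^p <c|T|d>,
   which vanishes on the diagonal.  The configurations a and b differ by one particle
   hopping from mode 0 to mode n/2, so |<a|T|b>| = 1, while L(a) = eta - 1 and
   L(b) = eta.  The two off-diagonal entries of D_p thus have modulus (2 eta - 1)^p and
   relative sign (-1)^p, which the phase i (p odd) or 1 (p even) makes interfere
   constructively: |<D_p>| = (2 eta - 1)^p exactly, and
   (2 eta)^p - (2 eta - 1)^p <= p (2 eta)^(p-1). *)

Lemma sum_delta_l (T : finType) (R : pzSemiRingType) (c : T) (F : T -> R) :
  \sum_e (e == c)%:R * F e = F c.
Proof.
rewrite (bigD1 c) //= eqxx mul1r big1 ?addr0 // => e /negbTE ne.
by rewrite ne mul0r.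
Qed.

Lemma sum_delta_r (T : finType) (R : pzSemiRingType) (d : T) (F : T -> R) :
  \sum_e F e * (e == d)%:R = F d.
Proof.
rewrite (bigD1 d) //= eqxx mulr1 big1 ?addr0 // => e /negbTE ne.
by rewrite ne mulr0.
Qed.

Lemma sum_ord_lt (R : pzSemiRingType) n k :
  \sum_(x < n) ((x < k)%N)%:R = (minn k n)%:R :> R.
Proof.
elim: n => [|n IH]; first by rewrite big_ord0 minn0.
by rewrite big_ord_recr /= IH -natrD; congr (_%:R); case: (ltnP n k) => /=; lia.
Qed.

Lemma subrXX_le (R : numDomainType) (x y : R) (p : nat) :
  0 <= y <= x -> x ^+ p - y ^+ p <= p%:R * (x - y) * x ^+ p.-1.
Proof.
case/andP=> y_ge0 y_le_x; have x_ge0 := le_trans y_ge0 y_le_x.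
rewrite subrXX -mulrA mulrCA ler_wpM2l ?subr_ge0 //.
rewrite mulr_natl -[p in _ *+ p]card_ord -sumr_const.
apply: ler_sum => i _; have i_le : (i <= p.-1)%N by have := ltn_ord i; lia.
rewrite -{2}(subnK i_le) exprD.
by rewrite ler_wpM2l ?exprn_ge0 // lerXn2r ?nnegrE.
Qed.

Lemma expect_superposition n (psi : state n) (a b : cfg n) (s beta : algC) (O : op n) :
  (forall c, psi c = s * (ket a c + beta * ket b c)) ->
  expect psi O =
  s^* * s * (O a a + beta * O a b + beta^* * O b a + beta^* * beta * O b b).
Proof.
move=> psiE; rewrite /expect.
have O_psi c : \sum_d O c d * psi d = s * O c a + s * beta * O c b.
  rewrite (eq_bigr (fun d => s * (O c d * ket a d) + s * beta * (O c d * ket b d))).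
    by rewrite big_split /= -!mulr_sumr !sum_delta_r.
  by move=> d _; rewrite psiE; ring.
rewrite (eq_bigr (fun c => s^* * (ket a c * (s * O c a + s * beta * O c b)) +
                           s^* * beta^* * (ket b c * (s * O c a + s * beta * O c b)))).
  by rewrite big_split /= -!mulr_sumr !sum_delta_l; ring.
move=> c _; transitivity ((psi c)^* * \sum_d O c d * psi d).
  by rewrite mulr_sumr; apply: eq_bigr => d _; rewrite mulrA.
by rewrite O_psi psiE /ket rmorphM rmorphD rmorphM !rmorph_nat; ring.
Qed.

Section OccupationBasis.

Variable n : nat.
Implicit Types (c d e : cfg n) (j k : 'I_n).

Definition unset c j : cfg n := [ffun k => if k == j then false else c k].

Lemma cre_unset j c e :
  cre j c e = if c j && (e == unset c j) then jw_sign e j else 0.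
Proof.
rewrite /cre; congr (if _ then _ else _); apply/idP/idP.
- case/andP=> ej /eqP ->; rewrite ffunE eqxx /=; apply/eqP/ffunP => k.
  by rewrite !ffunE; case: eqP => [->|] //; rewrite (negbTE ej).
- case/andP=> cj /eqP ->; rewrite !ffunE eqxx /=; apply/eqP/ffunP => k.
  by rewrite !ffunE; case: eqP => [->|].
Qed.

Lemma conj_jw_sign e j : (jw_sign e j)^* = jw_sign e j.
Proof. by rewrite /jw_sign rmorphXn rmorphN1. Qed.

Lemma normr_jw_sign e j : `|jw_sign e j| = 1.
Proof. by rewrite /jw_sign normrX normrN1 expr1n. Qed.

Lemma opmul_cre_ann j k c d : opmul (cre j) (ann k) c d =
  if c j && d k && (unset c j == unset d k)
  then jw_sign (unset c j) j * jw_sign (unset d k) k else 0.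
Proof.
rewrite /opmul /ann /opadj.
under eq_bigr => e _ do rewrite cre_unset.
case cj: (c j) => /=; last by rewrite big1 // => e _; rewrite mul0r.
rewrite (eq_bigr (fun e => if e == unset c j then jw_sign e j * (cre k d e)^* else 0)).
  rewrite -big_mkcond big_pred1_eq cre_unset.
  case: (d k) => /=; last by rewrite rmorph0 mulr0.
  by case: eqP => [->|_]; rewrite ?conj_jw_sign // rmorph0 mulr0.
by move=> e _; case: eqP; rewrite ?mul0r.
Qed.

Lemma numopE j c d : numop j c d = (c == d)%:R * (c j)%:R.
Proof.
rewrite /numop opmul_cre_ann.
case cj: (c j); case dj: (d j) => /=; rewrite ?mulr0 ?mulr1 //.
- have -> : (unset c j == unset d j) = (c == d).
    apply/eqP/eqP => [cd|-> //]; apply/ffunP => k.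
    have := congr1 (fun f : cfg n => f k) cd; rewrite !ffunE.
    by case: eqP => [->|] //; rewrite cj dj.
  by case: eqP => [->|_] //; rewrite -{2}conj_jw_sign -normCK normr_jw_sign expr1n.
- by case: eqP => // cd; rewrite cd dj in cj.
Qed.

Definition lower_occ c : algC := \sum_(x < n | (x < n./2)%N) (c x)%:R.

Lemma VopE c d : Vop n c d = (c == d)%:R * lower_occ c ^+ 2.
Proof.
rewrite /Vop /lower_occ expr2 mulr_suml big_distrr; apply: eq_bigr => x _.
rewrite mulr_sumr big_distrr; apply: eq_bigr => y _; rewrite /opmul.
under eq_bigr => e _ do rewrite numopE eq_sym -mulrA.
by rewrite sum_delta_l numopE mulrCA.
Qed.

Lemma comm_diag (D X : op n) (f : cfg n -> algC) c d :
  (forall c d, D c d = (c == d)%:R * f c) -> comm D X c d = (f c - f d) * X c d.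
Proof.
move=> DE; rewrite /comm /opmul.
under eq_bigr => e _ do rewrite DE eq_sym -mulrA.
under [X in _ - X]eq_bigr => e _ do rewrite DE mulrCA mulrC.
by rewrite sum_delta_l sum_delta_r mulrBl [X c d * _]mulrC.
Qed.

Lemma DopE p c d : Dop n p c d = (lower_occ c ^+ 2 - lower_occ d ^+ 2) ^+ p * Top n c d.
Proof.
elim: p c d => [|p IH] c d; first by rewrite expr0 mul1r.
have VopE_diag := comm_diag _ _ (fun e => lower_occ e ^+ 2) _ _ VopE.
have -> : Dop n p.+1 c d = comm (Vop n) (Dop n p) c d by [].
by rewrite VopE_diag IH [in RHS]exprS mulrA.
Qed.

Lemma Dop_diag p c : Dop n p.+1 c c = 0.
Proof. by rewrite DopE subrr expr0n mul0r. Qed.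

Lemma Top_sym c d : Top n c d = Top n d c.
Proof.
rewrite /Top exchange_big; apply: eq_bigr => j _; apply: eq_bigr => k _.
by rewrite !opmul_cre_ann [c k && _]andbC eq_sym mulrC.
Qed.

End OccupationBasis.

Arguments unset {n}.
Arguments lower_occ {n}.

Section SingleHop.

Variables n eta : nat.
Hypotheses (eta_gt0 : (1 <= eta)%N) (eta_le_half : (eta <= n./2)%N).

Local Notation a := (cfg_a n eta).
Local Notation b := (cfg_b n eta).

Let half_lt_n : (n./2 < n)%N. Proof. lia. Qed.
Let n_gt0 : (0 < n)%N. Proof. lia. Qed.
Let mid : 'I_n := Ordinal half_lt_n.
Let zero : 'I_n := Ordinal n_gt0.

Lemma hop_ab j k :
  a j && b k && (unset a j == unset b k) = (j == mid) && (k == zero).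
Proof.
apply/idP/idP.
- case/andP=> /andP [aj bk] /eqP ab.
  move: (congr1 (fun f : cfg n => f zero) ab) (congr1 (fun f : cfg n => f mid) ab) aj bk.
  clear ab; rewrite !ffunE /=; case: j => j lt_j; case: k => k lt_k.
  rewrite /eq_op /=; move: (n./2) eta_gt0 eta_le_half => m ? ?.
  by case: (0 =P j) => ?; case: (0 =P k) => ?; case: (m =P j) => ?; case: (m =P k) => ?;
    subst => //=; rewrite ?eqxx ?orbT /=; lia.
- case/andP=> /eqP -> /eqP ->; rewrite !ffunE /= eqxx eta_gt0 orbT /=.
  apply/eqP/ffunP => -[i lt_i]; rewrite !ffunE /eq_op /=.
  by move: (n./2) eta_gt0 eta_le_half => m ? ?; case: (i =P m) => ?; case: (i =P 0) => ?;
    subst => //=; lia.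
Qed.

Lemma normr_Top_ab : `|Top n a b| = 1.
Proof.
rewrite /Top.
under eq_bigr => j _ do under eq_bigr => k _ do rewrite opmul_cre_ann hop_ab.
rewrite (bigD1 mid) //= eqxx /= -big_mkcond big_pred1_eq big1 ?addr0.
  by rewrite normrM !normr_jw_sign mulr1.
by move=> j /negbTE j_mid; apply: big1 => k _; rewrite j_mid.
Qed.

Lemma lower_occ_b : lower_occ b = eta%:R.
Proof.
rewrite /lower_occ big_mkcond (eq_bigr (fun x : 'I_n => ((x < eta)%N)%:R)).
  by rewrite sum_ord_lt; congr (_%:R); lia.
move=> x _; rewrite ffunE; case: ltnP => // x_ge.
by rewrite ltnNge (leq_trans eta_le_half x_ge).
Qed.

Lemma lower_occ_a : lower_occ a = eta%:R - 1.
Proof.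
rewrite /lower_occ big_mkcond.
rewrite (eq_bigr (fun x : 'I_n => ((x < eta)%N)%:R - ((x < 1)%N)%:R)).
  by rewrite sumrB !sum_ord_lt !(minn_idPl (_ : _ <= n)%N) //; lia.
move=> [x lt_x] _; rewrite ffunE /=; case: ltnP => x_lt.
  rewrite (ltn_eqF x_lt) orbF.
  by case: x {lt_x x_lt} => [|x] /=; rewrite ?eta_gt0 ?subrr ?subr0.
have [-> ->] : (x < eta)%N = false /\ (x < 1)%N = false by split; lia.
by rewrite subrr.
Qed.

Lemma Dop_ab p : Dop n p a b = (1 - 2 * eta%:R) ^+ p * Top n a b.
Proof. by rewrite DopE lower_occ_a lower_occ_b; congr (_ ^+ _ * _); ring. Qed.

Lemma Dop_ba p : Dop n p b a = (2 * eta%:R - 1) ^+ p * Top n a b.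
Proof. by rewrite DopE lower_occ_a lower_occ_b Top_sym; congr (_ ^+ _ * _); ring. Qed.

Lemma normr_expect_Dop p : (0 < p)%N ->
  `|expect (if odd p then psi_eta n eta else phi_eta n eta) (Dop n p)|
  = (2 * eta%:R - 1) ^+ p.
Proof.
case: p => // p _; set w : algC := 2 * eta%:R - 1; set t := Top n a b.
have w_ge0 : 0 <= w by rewrite subr_ge0 -natrM ler1n; lia.
have Dab : Dop n p.+1 a b = (-1) ^+ p.+1 * w ^+ p.+1 * t.
  by rewrite Dop_ab -opprB -exprNn.
have half_sqrt2 : ((sqrtC 2)^-1)^* * (sqrtC 2)^-1 = 2^-1 :> algC.
  by rewrite geC0_conj ?invr_ge0 ?sqrtC_ge0 ?ler0n // -expr2 exprVn sqrtCK.
have normr_wt : `|w ^+ p.+1 * t| = w ^+ p.+1.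
  by rewrite normrM normr_Top_ab mulr1 normrX ger0_norm.
case: ifP => p_odd.
- rewrite (@expect_superposition _ _ a b (sqrtC 2)^-1 'i) //.
  rewrite half_sqrt2 !Dop_diag Dab Dop_ba -signr_odd p_odd expr1 conjCi.
  have -> : 2^-1 * (0 + 'i * (-1 * w ^+ p.+1 * t) + - 'i * (w ^+ p.+1 * t)
      + - 'i * 'i * 0) = - 'i * (w ^+ p.+1 * t) :> algC by field.
  by rewrite normrM normrN normCi mul1r normr_wt.
- rewrite (@expect_superposition _ _ a b (sqrtC 2)^-1 1) => [|c]; last by rewrite mul1r.
  rewrite half_sqrt2 !Dop_diag Dab Dop_ba -signr_odd p_odd expr0 rmorph1.
  have -> : 2^-1 * (0 + 1 * (1 * w ^+ p.+1 * t) + 1 * (w ^+ p.+1 * t)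
      + 1 * 1 * 0) = w ^+ p.+1 * t :> algC by field.
  exact: normr_wt.
Qed.

End SingleHop.

Theorem proposition14 (p : nat) (hp : (1 <= p)%N) :
  exists C : algC, 0 <= C /\
    forall (n eta : nat), ~~ odd n -> (1 <= eta)%N -> (eta <= n./2)%N ->
      `| `| expect (if odd p then psi_eta n eta else phi_eta n eta) (Dop n p) |
         - 2%:R ^+ p * eta%:R ^+ p | <= C * eta%:R ^+ p.-1.
Proof.
exists (p * 2 ^ p.-1)%:R; split=> [|n eta _ eta_gt0 eta_le_half]; first exact: ler0n.
rewrite normr_expect_Dop // -exprMn natrM natrX -mulrA -exprMn.
set x : algC := 2 * eta%:R.
have x1_ge0 : 0 <= x - 1 by rewrite /x subr_ge0 -natrM ler1n; lia.
have x1_le_x : x - 1 <= x by rewrite gerBl ler01.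
rewrite distrC ger0_norm; last by rewrite subr_ge0 lerXn2r ?nnegrE // (le_trans x1_ge0).
have := @subrXX_le _ x (x - 1) p.
by rewrite x1_ge0 x1_le_x opprB addrCA subrr addr0 mulr1; apply.
Qed.
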